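(* For all nonnegative integers $c_<$, $c_=$ and $m$, $$\sum_{a=0}^{m}(a+1)\frac{\binom{c_<}{a}\binom{c_<+c_=-a}{m-a}}{\binom{m}{a}}=\frac{(m+1)(m+2)}{(c_=+1)(c_=+2)}\binom{c_<+c_=+2}{m+2}-\frac{(c_<+1)(c_<-m)}{c_=+1}\binom{c_<}{m}+\frac{(c_<-m)(c_<-m-1)}{c_=+2}\binom{c_<}{m}.$$
   Context: Binomial coefficients use the convention $\binom{p}{q}=0$ when $q>p$ or $q<0$ (for nonnegative integer $p$). *)

From mathcomp Require Import all_boot all_order all_algebra.

From mathcomp Require Import all_boot all_order all_algebra zify ring.
Import GRing.Theory Num.Theory.
Local Open Scope ring_scope.

(* Write n = cl + ce.  Trinomial revision, applied to C(n, cl) C(cl, a) and to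
   C(n, m) C(m, a), turns the a-th summand into C(n - a, ce) C(n, m) / C(n, cl).
   The weighted sum of C(n - a, ce) over a <= m is a second-order hockey stick:
   C(n + 2, ce + 2) minus two boundary terms.  By the absorption identities
   k C(n, k) = n C(n - 1, k - 1), the main term times C(n, m) / C(n, cl) is the
   first term on the right, while the boundary terms become multiples of
   C(cl, m) that recombine into the other two. *)

Lemma mul_bin_trinomial n k a : (a <= k)%N ->
  ('C(n, k) * 'C(k, a) = 'C(n, a) * 'C(n - a, k - a))%N.
Proof.
move=> le_ak; have [le_kn|lt_nk] := leqP k n; last first.
  rewrite bin_small // mul0n; have [le_an|lt_na] := leqP a n.
    by rewrite (@bin_small (n - a)) ?muln0 //; lia.
  by rewrite bin_small.
have fact_pos : (0 < a`! * (k - a)`! * (n - k)`!)%N by rewrite !muln_gt0 !fact_gt0.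
apply/eqP; rewrite -(eqn_pmul2r fact_pos); apply/eqP.
have le_an : (a <= n)%N by apply: leq_trans le_kn.
have n_sub : (n - k = n - a - (k - a))%N by lia.
transitivity n`!.
  by rewrite -(bin_fact le_kn) -(bin_fact le_ak); ring.
rewrite -(bin_fact le_an) -(bin_fact (_ : k - a <= n - a)%N) -?n_sub; [ring | lia].
Qed.

Lemma mul_bin_diag2 n k :
  (k.+1 * k.+2 * 'C(n.+2, k.+2) = n.+1 * n.+2 * 'C(n, k))%N.
Proof.
by rewrite -mulnA -(mul_bin_diag n.+2) mulnCA -(mul_bin_diag n.+1) mulnA (mulnC n.+2).
Qed.

Lemma mul_bin_left2 n k :
  (k.+1 * k.+2 * 'C(n.+1, k.+2) = (n - k) * n.+1 * 'C(n, k))%N.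
Proof. by rewrite -mulnA mul_bin_left subSS mulnCA -mul_bin_diag mulnA. Qed.

Lemma mul_bin_summand cl ce m a : (a <= m)%N ->
  ('C(cl, a) * 'C(cl + ce - a, m - a) * 'C(cl + ce, cl)
   = 'C(m, a) * 'C(cl + ce - a, ce) * 'C(cl + ce, m))%N.
Proof.
move=> le_am; rewrite [RHS]mulnAC (mulnC 'C(m, a)) mul_bin_trinomial //.
have [le_acl|lt_cla] := leqP a cl; last first.
  rewrite (@bin_small cl a) // !mul0n; have [le_an|lt_na] := leqP a (cl + ce).
    by rewrite (@bin_small _ ce) ?muln0 //; lia.
  by rewrite bin_small.
rewrite [LHS]mulnAC (mulnC 'C(cl, a)) mul_bin_trinomial // mulnAC.
rewrite -[in LHS](@bin_sub _ (cl - a)); last lia.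
by rewrite (_ : cl + ce - a - (cl - a) = ce)%N //; lia.
Qed.

Lemma weighted_hockey_stick k m p :
  (\sum_(a < m.+1) a.+1 * 'C(p + m - a, k) + 'C(p.+1, k.+2) + m.+1 * 'C(p, k.+1)
   = 'C(p + m + 2, k.+2))%N.
Proof.
elim: m p => [|m IHm] p.
  by rewrite big_ord1 /= addn0 subn0 mul1n addn2 !binS; ring.
rewrite big_ord_recr /= addnS -addSn -(IHm p.+1) addSn subSS addnK.
by rewrite (binS p.+1 k.+1) (binS p k); ring.
Qed.

Lemma natr_binSS {R : numFieldType} n k : ('C(n.+2, k.+2)%:R : R)
  = n.+1%:R * n.+2%:R / (k.+1%:R * k.+2%:R) * 'C(n, k)%:R.
Proof.
rewrite mulrAC -!natrM -mul_bin_diag2 (natrM _ (k.+1 * k.+2)) mulrC mulKf //.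
by rewrite pnatr_eq0.
Qed.

Section BinomialRatio.

Context {R : numFieldType} (cl ce m : nat).

Let ratio : R := 'C(cl + ce, m)%:R / 'C(cl + ce, cl)%:R.

Lemma binCl_neq0 : ('C(cl + ce, cl)%:R : R) != 0.
Proof. by rewrite pnatr_eq0 -lt0n bin_gt0 leq_addr. Qed.

Lemma summandE a : (a < m.+1)%N ->
  'C(cl, a)%:R * 'C(cl + ce - a, m - a)%:R / 'C(m, a)%:R
  = 'C(cl + ce - a, ce)%:R * ratio :> R.
Proof.
move=> lt_am; rewrite /ratio mulrA; apply/eqP.
rewrite eqr_div ?binCl_neq0 ?pnatr_eq0 -?lt0n ?bin_gt0 //; apply/eqP.
by rewrite -!natrM mul_bin_summand // [in RHS]mulnC mulnA.
Qed.

Lemma sum_summandsE : (m <= cl + ce)%N ->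
  \sum_(a < m.+1) a.+1%:R * ('C(cl, a)%:R * 'C(cl + ce - a, m - a)%:R) / 'C(m, a)%:R
  = ('C(cl + ce + 2, ce.+2)%:R - 'C((cl + ce - m).+1, ce.+2)%:R
     - m.+1%:R * 'C(cl + ce - m, ce.+1)%:R) * ratio :> R.
Proof.
move=> le_mn.
transitivity ((\sum_(a < m.+1) a.+1 * 'C(cl + ce - a, ce))%N%:R * ratio).
  rewrite natr_sum mulr_suml; apply: eq_bigr => a _.
  by rewrite -mulrA summandE // natrM mulrA.
congr (_ * ratio); have := weighted_hockey_stick ce m (cl + ce - m); rewrite subnK //.
(* Generalizing first keeps natrD from unfolding 'C(_.+1, _.+1) into a sum. *)
move: (\sum_(_ < _) _)%N 'C(_.+1, ce.+2) 'C(_, ce.+1) => S X Y <-.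
by rewrite !natrD natrM; ring.
Qed.

Lemma bin_top_ratio :
  'C(cl + ce + 2, ce.+2)%:R * ratio
  = m.+1%:R * m.+2%:R / (ce.+1%:R * ce.+2%:R) * 'C(cl + ce + 2, m + 2)%:R :> R.
Proof.
have binCe_neq0 : ('C(cl + ce, ce)%:R : R) != 0.
  by rewrite pnatr_eq0 -lt0n bin_gt0 leq_addl.
rewrite !addn2 !natr_binSS /ratio -(@bin_sub (cl + ce) cl) ?leq_addr // addKn.
by field; rewrite binCe_neq0 !nat1r -!natrD !pnatr_eq0.
Qed.

Lemma bin_shift_ratio : (m <= cl)%N ->
  'C(cl + ce - m, ce)%:R * ratio = 'C(cl, m)%:R :> R.
Proof.
move=> le_mcl; rewrite /ratio mulrA; apply: (canLR (mulfK binCl_neq0)).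
rewrite -!natrM [in RHS]mulnC mul_bin_trinomial // mulnC.
rewrite -(@bin_sub _ ce); last lia.
by rewrite (_ : cl + ce - m - ce = cl - m)%N //; lia.
Qed.

Lemma bin_ce1_ratio : 'C(cl + ce - m, ce.+1)%:R * ratio
  = (cl%:R - m%:R) / ce.+1%:R * 'C(cl, m)%:R :> R.
Proof.
have [lt_clm|le_mcl] := ltnP cl m.
  by rewrite !bin_small ?mul0r ?mulr0 //; lia.
rewrite -bin_shift_ratio // -natrB //.
apply: (mulfI (_ : ce.+1%:R != 0)); first by rewrite pnatr_eq0.
rewrite mulrA -natrM mul_bin_left natrM (_ : cl + ce - m - ce = cl - m)%N; last lia.
by field; rewrite nat1r pnatr_eq0.
Qed.

Lemma bin_ce2_ratio : 'C((cl + ce - m).+1, ce.+2)%:R * ratio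
  = (cl%:R - m%:R) * (cl%:R - m%:R + ce.+1%:R) / (ce.+1%:R * ce.+2%:R)
    * 'C(cl, m)%:R :> R.
Proof.
have [lt_clm|le_mcl] := ltnP cl m.
  by rewrite !bin_small ?mul0r ?mulr0 //; lia.
rewrite -bin_shift_ratio // -natrB // -natrD.
apply: (mulfI (_ : ce.+1%:R * ce.+2%:R != 0)); first by rewrite -natrM pnatr_eq0.
rewrite mulrA -!natrM mul_bin_left2 !natrM.
rewrite (_ : cl + ce - m - ce = cl - m)%N; last lia.
rewrite (_ : cl - m + ce.+1 = (cl + ce - m).+1)%N; last lia.
by field; rewrite !nat1r -!natrD !pnatr_eq0.
Qed.

End BinomialRatio.

Theorem lemma3 (cl ce m : nat) :
  \sum_(a < m.+1)
     (a.+1)%:R * ('C(cl, a)%:R * 'C(cl + ce - a, m - a)%:R) / ('C(m, a)%:R : rat)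
  = (m.+1)%:R * (m.+2)%:R / ((ce.+1)%:R * (ce.+2)%:R) * 'C(cl + ce + 2, m + 2)%:R
    - (cl.+1)%:R * (cl%:R - m%:R) / (ce.+1)%:R * 'C(cl, m)%:R
    + (cl%:R - m%:R) * (cl%:R - m%:R - 1) / (ce.+2)%:R * 'C(cl, m)%:R.
Proof.
have [lt_nm|le_mn] := ltnP (cl + ce) m.
  rewrite big1 => [|a _]; last first.
    by rewrite -mulrA summandE ?ltn_ord // (@bin_small _ m) //; ring.
  rewrite (@bin_small (cl + ce + 2)) ?(@bin_small cl m); try lia.
  by ring.
rewrite sum_summandsE // !mulrBl -(mulrA m.+1%:R).
rewrite bin_top_ratio bin_ce2_ratio bin_ce1_ratio.
by field; rewrite !nat1r -!natrD !pnatr_eq0.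
Qed.
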